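(* Let $\varepsilon>0$, let $\Omega\subset\mathbb{R}$ be a bounded set with $\operatorname{diam}(\Omega)=D$, and let $\mathcal{X},\mathcal{Y}\subset\Omega$ be disjoint. For $n\ge 0$ and $t\in\mathbb{R}$ define $$\alpha_n(t)=\frac{2^n\varepsilon^{2n}e^{-\varepsilon^2t^2}t^n}{n!},\qquad \beta_n(t)=e^{-\varepsilon^2t^2}t^n .$$ Let $\delta>0$. If the integer $r\ge 0$ satisfies $$r>\max\Big\{\log_2\!\Big(\frac{e^{2\varepsilon^2D^2}}{\delta}\Big)-1,\; 12\varepsilon^2D^2-1\Big\},$$ then for every $\bar x\in\mathcal{X}$, every $x\in\mathcal{X}$ and every $y\in\mathcal{Y}$, $$\Big|e^{-\varepsilon^2(x-y)^2}-\sum_{n=0}^{r}\alpha_n(x-\bar x)\,\beta_n(y-\bar x)\Big|<\delta .$$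
   Context: Here $\operatorname{diam}(\Omega)=\sup_{u,v\in\Omega}|u-v|$. Note that $\sum_{n=0}^\infty\alpha_n(x-\bar x)\beta_n(y-\bar x)=e^{-\varepsilon^2(x-y)^2}$ (Taylor expansion of the exponential). *)

From Stdlib Require Import Reals Lra.
Open Scope R_scope.

Definition alpha (eps : R) (n : nat) (t : R) : R :=
  2 ^ n * eps ^ (2 * n) * exp (- eps ^ 2 * t ^ 2) * t ^ n / INR (Factorial.fact n).

Definition beta (eps : R) (n : nat) (t : R) : R :=
  exp (- eps ^ 2 * t ^ 2) * t ^ n.

Definition bounded_set (Om : R -> Prop) : Prop :=
  exists M : R, forall u, Om u -> Rabs u <= M.

Definition is_diam (Om : R -> Prop) (D : R) : Prop :=
  is_lub (fun d => exists u v, Om u /\ Om v /\ d = Rabs (u - v)) D.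

Definition log2 (z : R) : R := ln z / ln 2.

(* Writing a = x - xb and b = y - xb, the Gaussian factors as
   exp(-eps^2 (a - b)^2) = exp(-eps^2 a^2) exp(-eps^2 b^2) exp(z) with z = 2 eps^2 a b,
   and the truncated sum is the same Gaussian prefactor (at most 1) times the degree-r
   Taylor polynomial of exp at z.  The Lagrange remainder is at most
   |z|^(r+1)/(r+1)! e^|z| <= c^N/N! e^c with c = 2 eps^2 D^2 and N = r + 1.
   The hypothesis N > 6c together with N! >= (N/3)^N gives c^N/N! <= 2^(-N), and
   N > log2(e^c/delta) gives e^c 2^(-N) < delta. *)

From Stdlib Require Import Reals Lra Lia.
From Coquelicot Require Import Coquelicot.
Open Scope R_scope.

Lemma exp_le_compat (x y : R) : x <= y -> exp x <= exp y.
Proof.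
  intros [Hlt | ->]; [apply Rlt_le, exp_increasing, Hlt | apply Rle_refl].
Qed.

Lemma Derive_n_exp_scal (s : R) (m : nat) (t : R) :
  Derive_n (fun u => exp (s * u)) m t = s ^ m * exp (s * t).
Proof.
  revert t; induction m as [|m IH]; intro t; simpl; [ring|].
  rewrite (Derive_ext _ (fun u => s ^ m * exp (s * u))) by exact IH.
  apply is_derive_unique; auto_derive; auto; ring.
Qed.

Lemma ex_derive_n_exp_scal (s : R) (k : nat) (t : R) :
  ex_derive_n (fun u => exp (s * u)) k t.
Proof.
  destruct k as [|k]; simpl; [exact I|].
  apply (ex_derive_ext (fun u => s ^ k * exp (s * u))).
  - intro u; symmetry; apply Derive_n_exp_scal.
  - auto_derive; auto.
Qed.

Lemma exp_scal_taylor_lagrange (s y : R) (r : nat) : 0 < y ->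
  exists zeta, 0 < zeta < y /\
    exp (s * y) = sum_f_R0 (fun n => (s * y) ^ n / INR (Factorial.fact n)) r
                  + (s * y) ^ S r / INR (Factorial.fact (S r)) * exp (s * zeta).
Proof.
  intro Hy.
  destruct (Taylor_Lagrange (fun u => exp (s * u)) r 0 y Hy)
    as [zeta [Hzeta E]]; [intros; apply ex_derive_n_exp_scal|].
  exists zeta; split; [exact Hzeta|].
  rewrite E, Derive_n_exp_scal, Rminus_0_r; f_equal.
  - apply sum_eq; intros n _.
    rewrite Derive_n_exp_scal, Rmult_0_r, exp_0, Rpow_mult_distr; field.
    apply INR_fact_neq_0.
  - rewrite Rpow_mult_distr; field; apply INR_fact_neq_0.
Qed.

Lemma sum_pow0_div_fact (r : nat) :
  sum_f_R0 (fun n => 0 ^ n / INR (Factorial.fact n)) r = 1.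
Proof.
  induction r as [|r IH]; [simpl; field|].
  rewrite tech5, IH, pow_i by lia; field; apply INR_fact_neq_0.
Qed.

Lemma exp_taylor_lagrange (z : R) (r : nat) :
  exists xi, Rabs xi <= Rabs z /\
    exp z = sum_f_R0 (fun n => z ^ n / INR (Factorial.fact n)) r
            + z ^ S r / INR (Factorial.fact (S r)) * exp xi.
Proof.
  destruct (Req_dec z 0) as [->|Hz].
  { exists 0; split; [lra|].
    rewrite sum_pow0_div_fact, pow_i, exp_0 by lia; field; apply INR_fact_neq_0. }
  (* Taylor_Lagrange only expands to the right, so expand exp (s u) along
     [0, |z|] in the direction s = z / |z|. *)
  assert (Habs : 0 < Rabs z) by (apply Rabs_pos_lt; exact Hz).
  set (s := z / Rabs z).
  assert (Hsz : s * Rabs z = z) by (unfold s; field; lra).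
  assert (Hs : Rabs s = 1).
  { unfold s; rewrite Rabs_div, Rabs_Rabsolu by lra; field; lra. }
  destruct (exp_scal_taylor_lagrange s (Rabs z) r Habs) as [zeta [Hzeta E]].
  rewrite Hsz in E.
  exists (s * zeta); split; [|exact E].
  rewrite Rabs_mult, Hs, Rabs_right by lra; lra.
Qed.

Lemma exp_taylor_remainder_le (z : R) (r : nat) :
  Rabs (exp z - sum_f_R0 (fun n => z ^ n / INR (Factorial.fact n)) r)
  <= Rabs z ^ S r / INR (Factorial.fact (S r)) * exp (Rabs z).
Proof.
  destruct (exp_taylor_lagrange z r) as [xi [Hxi ->]].
  replace (_ + _ - _) with (z ^ S r / INR (Factorial.fact (S r)) * exp xi) by ring.
  rewrite Rabs_mult, Rabs_div by apply INR_fact_neq_0.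
  rewrite <- RPow_abs, (Rabs_right (INR _)), (Rabs_right (exp xi))
    by (apply Rle_ge, Rlt_le; first [apply INR_fact_lt_0 | apply exp_pos]).
  apply Rmult_le_compat_l.
  - apply Rdiv_le_0_compat; [apply pow_le, Rabs_pos | apply INR_fact_lt_0].
  - apply exp_le_compat; pose proof (Rle_abs xi); lra.
Qed.

Lemma pow_div_fact_le_exp (x : R) (n : nat) : 0 <= x ->
  x ^ n / INR (Factorial.fact n) <= exp x.
Proof.
  intro Hx.
  apply Rle_trans with (2 := exp_ge_taylor x n Hx).
  assert (Hterm : forall k, 0 <= x ^ k / INR (Factorial.fact k))
    by (intro k; apply Rdiv_le_0_compat; [apply pow_le, Hx | apply INR_fact_lt_0]).
  destruct n as [|n]; simpl; [lra|].
  pose proof (cond_pos_sum _ n Hterm); lra.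
Qed.

Lemma exp_INR (n : nat) : exp (INR n) = exp 1 ^ n.
Proof.
  induction n as [|n IH]; [simpl; apply exp_0|].
  rewrite S_INR, exp_plus, IH; simpl; ring.
Qed.

(* Since e <= 3, the bound n^n/n! <= e^n gives n! >= (n/3)^n. *)
Lemma pow_div3_le_fact (n : nat) : (INR n / 3) ^ n <= INR (Factorial.fact n).
Proof.
  pose proof (pow_div_fact_le_exp (INR n) n (pos_INR n)) as Hexp.
  rewrite exp_INR in Hexp.
  assert (Hfact : 0 < INR (Factorial.fact n)) by apply INR_fact_lt_0.
  assert (H3 : exp 1 ^ n <= 3 ^ n)
    by (apply pow_incr; pose proof exp_le_3; pose proof (exp_pos 1); lra).
  assert (H3pos : 0 < 3 ^ n) by (apply pow_lt; lra).
  unfold Rdiv in *; rewrite Rpow_mult_distr, pow_inv.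
  apply (Rmult_le_reg_r (3 ^ n)); [exact H3pos|].
  rewrite Rmult_assoc, Rinv_l by lra.
  apply (Rmult_le_reg_r (/ INR (Factorial.fact n))); [apply Rinv_0_lt_compat, Hfact|].
  replace (INR (Factorial.fact n) * 3 ^ n * / INR (Factorial.fact n)) with (3 ^ n) by (field; lra).
  lra.
Qed.

Lemma pow_div_fact_le_inv_pow2 (c : R) (n : nat) : 0 <= c -> 6 * c <= INR n ->
  c ^ n / INR (Factorial.fact n) <= / 2 ^ n.
Proof.
  intros Hc Hn.
  assert (H2c : (2 * c) ^ n <= INR (Factorial.fact n)).
  { apply Rle_trans with (2 := pow_div3_le_fact n); apply pow_incr; lra. }
  assert (Hfact : 0 < INR (Factorial.fact n)) by apply INR_fact_lt_0.
  assert (H2pos : 0 < 2 ^ n) by (apply pow_lt; lra).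
  rewrite Rpow_mult_distr in H2c.
  apply (Rmult_le_reg_r (INR (Factorial.fact n) * 2 ^ n)); [nra|].
  replace (c ^ n / INR (Factorial.fact n) * (INR (Factorial.fact n) * 2 ^ n)) with (2 ^ n * c ^ n)
    by (field; lra).
  replace (/ 2 ^ n * (INR (Factorial.fact n) * 2 ^ n)) with (INR (Factorial.fact n)) by (field; lra).
  exact H2c.
Qed.

Lemma lt_pow2_of_log2_lt (w : R) (n : nat) : 0 < w -> log2 w < INR n -> w < 2 ^ n.
Proof.
  intros Hw Hlog.
  assert (Hln2 : 0 < ln 2) by (rewrite <- ln_1; apply ln_increasing; lra).
  unfold log2 in Hlog.
  apply (Rmult_lt_compat_r (ln 2)) in Hlog; [|exact Hln2].
  unfold Rdiv in Hlog; rewrite Rmult_assoc, Rinv_l, Rmult_1_r, <- ln_pow in Hlog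
    by lra.
  apply ln_lt_inv; [exact Hw | apply pow_lt; lra | exact Hlog].
Qed.

Lemma gauss_le_1 (eps t : R) : exp (- eps ^ 2 * t ^ 2) <= 1.
Proof.
  rewrite <- exp_0; apply exp_le_compat.
  pose proof (pow2_ge_0 eps); pose proof (pow2_ge_0 t); nra.
Qed.

Lemma gauss_sub (eps a b : R) :
  exp (- eps ^ 2 * (a - b) ^ 2)
  = exp (- eps ^ 2 * a ^ 2) * exp (- eps ^ 2 * b ^ 2) * exp (2 * eps ^ 2 * a * b).
Proof. rewrite <- !exp_plus; f_equal; ring. Qed.

Lemma sum_alpha_mul_beta (eps a b : R) (r : nat) :
  sum_f_R0 (fun n => alpha eps n a * beta eps n b) r
  = exp (- eps ^ 2 * a ^ 2) * exp (- eps ^ 2 * b ^ 2)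
    * sum_f_R0 (fun n => (2 * eps ^ 2 * a * b) ^ n / INR (Factorial.fact n)) r.
Proof.
  rewrite scal_sum; apply sum_eq; intros n _.
  unfold alpha, beta; rewrite pow_mult, !Rpow_mult_distr.
  field; apply INR_fact_neq_0.
Qed.

Lemma gauss_truncation_error_le (eps a b : R) (r : nat) :
  Rabs (exp (- eps ^ 2 * (a - b) ^ 2)
        - sum_f_R0 (fun n => alpha eps n a * beta eps n b) r)
  <= Rabs (2 * eps ^ 2 * a * b) ^ S r / INR (Factorial.fact (S r))
     * exp (Rabs (2 * eps ^ 2 * a * b)).
Proof.
  rewrite gauss_sub, sum_alpha_mul_beta, <- Rmult_minus_distr_l, Rabs_mult.
  set (K := exp (- eps ^ 2 * a ^ 2) * exp (- eps ^ 2 * b ^ 2)).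
  assert (HK : Rabs K <= 1).
  { unfold K; rewrite Rabs_right by (apply Rle_ge, Rmult_le_pos; apply Rlt_le, exp_pos).
    pose proof (gauss_le_1 eps a); pose proof (gauss_le_1 eps b).
    pose proof (exp_pos (- eps ^ 2 * a ^ 2)); pose proof (exp_pos (- eps ^ 2 * b ^ 2)).
    nra. }
  pose proof (exp_taylor_remainder_le (2 * eps ^ 2 * a * b) r) as Hrem.
  pose proof (Rabs_pos K).
  pose proof (Rabs_pos (exp (2 * eps ^ 2 * a * b)
    - sum_f_R0 (fun n => (2 * eps ^ 2 * a * b) ^ n / INR (Factorial.fact n)) r)).
  nra.
Qed.

Lemma pow_div_fact_mul_exp_le (u c : R) (n : nat) : 0 <= u <= c ->
  u ^ n / INR (Factorial.fact n) * exp u <= c ^ n / INR (Factorial.fact n) * exp c.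
Proof.
  intro Hu.
  apply Rmult_le_compat.
  - apply Rdiv_le_0_compat; [apply pow_le; lra | apply INR_fact_lt_0].
  - apply Rlt_le, exp_pos.
  - apply Rmult_le_compat_r; [apply Rlt_le, Rinv_0_lt_compat, INR_fact_lt_0|].
    apply pow_incr; exact Hu.
  - apply exp_le_compat; lra.
Qed.

Lemma pow_div_fact_mul_exp_lt (c delta : R) (n : nat) : 0 < delta -> 0 <= c ->
  6 * c <= INR n -> log2 (exp c / delta) < INR n ->
  c ^ n / INR (Factorial.fact n) * exp c < delta.
Proof.
  intros Hdelta Hc H6 Hlog.
  assert (Hpow2 : exp c / delta < 2 ^ n).
  { apply lt_pow2_of_log2_lt; [|exact Hlog].
    apply Rdiv_lt_0_compat; [apply exp_pos | exact Hdelta]. }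
  pose proof (pow_div_fact_le_inv_pow2 c n Hc H6) as Hterm.
  assert (H2pos : 0 < 2 ^ n) by (apply pow_lt; lra).
  pose proof (exp_pos c).
  apply Rle_lt_trans with (exp c / 2 ^ n).
  - unfold Rdiv; rewrite Rmult_comm; apply Rmult_le_compat_l; lra.
  - apply (Rmult_lt_reg_r (2 ^ n / delta)); [apply Rdiv_lt_0_compat; lra|].
    replace (exp c / 2 ^ n * (2 ^ n / delta)) with (exp c / delta) by (field; lra).
    replace (delta * (2 ^ n / delta)) with (2 ^ n) by (field; lra).
    exact Hpow2.
Qed.

Lemma is_diam_ge (Om : R -> Prop) (D u v : R) : is_diam Om D -> Om u -> Om v ->
  Rabs (u - v) <= D.
Proof. intros [Hub _] Hu Hv; apply Hub; exists u, v; auto. Qed.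

Lemma Rabs_scal_mul_le (k a b D : R) : 0 <= k -> Rabs a <= D -> Rabs b <= D ->
  Rabs (k * a * b) <= k * D ^ 2.
Proof.
  intros Hk Ha Hb.
  rewrite !Rabs_mult, (Rabs_right k) by lra.
  pose proof (Rabs_pos a); pose proof (Rabs_pos b).
  assert (Rabs a * Rabs b <= D ^ 2) by nra.
  nra.
Qed.

Theorem lemma1 (eps : R) (Om X Y : R -> Prop) (D delta : R) (r : nat)
  (heps : 0 < eps)
  (hbd : bounded_set Om) (hD : is_diam Om D)
  (hX : forall u, X u -> Om u) (hY : forall u, Y u -> Om u)
  (hdisj : forall u, X u -> Y u -> False)
  (hdelta : 0 < delta)
  (hr : INR r > Rmax (log2 (exp (2 * eps ^ 2 * D ^ 2) / delta) - 1)
                     (12 * eps ^ 2 * D ^ 2 - 1)) :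
  forall xb x y, X xb -> X x -> Y y ->
    Rabs (exp (- eps ^ 2 * (x - y) ^ 2)
          - sum_f_R0 (fun n => alpha eps n (x - xb) * beta eps n (y - xb)) r)
    < delta.
Proof.
  intros xb x y Hxb Hx Hy.
  replace (x - y) with ((x - xb) - (y - xb)) by ring.
  set (c := 2 * eps ^ 2 * D ^ 2) in hr |- *.
  assert (Hz : Rabs (2 * eps ^ 2 * (x - xb) * (y - xb)) <= c).
  { apply Rabs_scal_mul_le; [pose proof (pow2_ge_0 eps); lra|
      apply (is_diam_ge Om); auto..]. }
  pose proof (Rabs_pos (2 * eps ^ 2 * (x - xb) * (y - xb))).
  pose proof (Rmax_l (log2 (exp c / delta) - 1) (12 * eps ^ 2 * D ^ 2 - 1)).
  pose proof (Rmax_r (log2 (exp c / delta) - 1) (12 * eps ^ 2 * D ^ 2 - 1)).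
  eapply Rle_lt_trans; [apply gauss_truncation_error_le|].
  apply Rle_lt_trans with (c ^ S r / INR (Factorial.fact (S r)) * exp c).
  - apply pow_div_fact_mul_exp_le; lra.
  - apply pow_div_fact_mul_exp_lt; rewrite ?S_INR; unfold c in *; lra.
Qed.
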